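(* Let $\mathcal{X},\mathcal{Y}$ be finite sets, $p(X,Y)$ a fully supported probability distribution on $\mathcal{X}\times\mathcal{Y}$, and $0\le\lambda\le I(X;Y)$. For $\kappa_{\mathcal{X}}\in C(\mathcal{X},\mathbb{N})$ let $\kappa=\kappa_{\mathcal{X}}\otimes e_{\mathcal{Y}}\in C(\mathcal{X}\times\mathcal{Y},\mathbb{N}\times\mathcal{Y})$ be the channel $\kappa(t,y'|x,y)=\kappa_{\mathcal{X}}(t|x)\,\delta_{y'=y}$, and let $C_{\mathrm{IB}(X,Y)}$ be the set of all such channels. Consider: (A) the problem of minimising $I_\kappa(X,Y;T)$ over $\kappa\in C_{\mathrm{IB}(X,Y)}$ subject to $D(\kappa(p(X,Y))\|\kappa(p(X)p(Y)))=\lambda$, where $T$ is the output of $\kappa$ (with values in $\mathbb{N}\times\mathcal{Y}$) and the mutual information is computed from $p(x,y)\kappa(t|x,y)$; (B) the Information Bottleneck problem of minimising $I_q(X;T_{\mathrm{IB}})$ over $q(T_{\mathrm{IB}}|X)\in C(\mathcal{X},\mathbb{N})$ subject to $I_q(Y;T_{\mathrm{IB}})\ge\lambda$, where the information quantities are computed from $q(x,y,t)=p(x,y)q(t|x)$. Then $\kappa_{\mathcal{X}}\otimes e_{\mathcal{Y}}$ is a solution (minimiser) of (A) if and only if $\kappa_{\mathcal{X}}$ is a solution of (B).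
   Context: For sets $\mathcal{A},\mathcal{B}$, $C(\mathcal{A},\mathcal{B})$ denotes the set of channels (conditional probabilities) from $\mathcal{A}$ to $\mathcal{B}$. For a channel $\kappa$ and a distribution $r$ on its input space, $\kappa(r)$ denotes the output distribution $\sum_{a}\kappa(\cdot|a)r(a)$. $D$ is the Kullback–Leibler divergence and $p(X),p(Y)$ are the marginals of $p(X,Y)$. *)

From HB Require Import structures.
From mathcomp Require Import all_boot all_order all_algebra.
From mathcomp Require Import all_classical all_reals all_analysis.
Set Implicit Arguments. Unset Strict Implicit. Unset Printing Implicit Defensive.
Import Order.TTheory GRing.Theory Num.Theory.
Local Open Scope ring_scope.

Definition xlogy {R : realType} (a b : R) : R :=
  if a == 0 then 0 else a * ln (a / b).

Definition full_support_dist {R : realType} {X Y : finType} (p : X -> Y -> R) :=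
  (forall x y, 0 < p x y) /\ \sum_(x : X) \sum_(y : Y) p x y = 1.

Definition margX {R : realType} {X Y : finType} (p : X -> Y -> R) (x : X) : R :=
  \sum_(y : Y) p x y.
Definition margY {R : realType} {X Y : finType} (p : X -> Y -> R) (y : Y) : R :=
  \sum_(x : X) p x y.

Definition MI_XY {R : realType} {X Y : finType} (p : X -> Y -> R) : R :=
  \sum_(x : X) \sum_(y : Y) xlogy (p x y) (margX p x * margY p y).

Definition is_channel_XN {R : realType} {X : finType} (k : X -> nat -> R) :=
  (forall x t, 0 <= k x t) /\
  (forall x, (\sum_(0 <= t <oo) (k x t)%:E)%E = 1%E).

Definition is_channel_XY_NY {R : realType} {X Y : finType}
    (k : X * Y -> nat * Y -> R) :=
  (forall a b, 0 <= k a b) /\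
  (forall a, (\sum_(0 <= t <oo) (\sum_(y : Y) k a (t, y))%:E)%E = 1%E).

Definition tensor_eY {R : realType} {X Y : finType} (kX : X -> nat -> R)
    : X * Y -> nat * Y -> R :=
  fun a b => kX a.1 b.1 * (b.2 == a.2)%:R.

Definition C_IB {R : realType} {X Y : finType} (k : X * Y -> nat * Y -> R) :=
  exists kX : X -> nat -> R, is_channel_XN kX /\ k = tensor_eY kX.

Definition push {R : realType} {X Y : finType} (r : X -> Y -> R)
    (k : X * Y -> nat * Y -> R) (b : nat * Y) : R :=
  \sum_(a : X * Y) k a b * r a.1 a.2.

Definition prod_marg {R : realType} {X Y : finType} (p : X -> Y -> R) : X -> Y -> R :=
  fun x y => margX p x * margY p y.

Definition KL_NY {R : realType} {Y : finType} (P Q : nat * Y -> R) : \bar R :=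
  (\sum_(0 <= t <oo) (\sum_(y : Y) xlogy (P (t, y)) (Q (t, y)))%:E)%E.

Definition MI_XY_T {R : realType} {X Y : finType} (p : X -> Y -> R)
    (k : X * Y -> nat * Y -> R) : \bar R :=
  (\sum_(0 <= t <oo)
     (\sum_(y' : Y) \sum_(a : X * Y)
        xlogy (p a.1 a.2 * k a (t, y')) (p a.1 a.2 * push p k (t, y')))%:E)%E.

Definition qT {R : realType} {X Y : finType} (p : X -> Y -> R)
    (q : X -> nat -> R) (t : nat) : R :=
  \sum_(x : X) margX p x * q x t.

Definition MI_X_TIB {R : realType} {X Y : finType} (p : X -> Y -> R)
    (q : X -> nat -> R) : \bar R :=
  (\sum_(0 <= t <oo)
     (\sum_(x : X) xlogy (margX p x * q x t) (margX p x * qT p q t))%:E)%E.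

Definition MI_Y_TIB {R : realType} {X Y : finType} (p : X -> Y -> R)
    (q : X -> nat -> R) : \bar R :=
  (\sum_(0 <= t <oo)
     (\sum_(y : Y) xlogy (\sum_(x : X) p x y * q x t) (margY p y * qT p q t))%:E)%E.

Definition solves_A {R : realType} {X Y : finType} (p : X -> Y -> R) (lam : R)
    (k : X * Y -> nat * Y -> R) :=
  [/\ C_IB k,
      KL_NY (push p k) (push (prod_marg p) k) = lam%:E &
      forall k' : X * Y -> nat * Y -> R, C_IB k' ->
        KL_NY (push p k') (push (prod_marg p) k') = lam%:E ->
        (MI_XY_T p k <= MI_XY_T p k')%E].

Definition solves_B {R : realType} {X Y : finType} (p : X -> Y -> R) (lam : R)
    (q : X -> nat -> R) :=
  [/\ is_channel_XN q,
      (lam%:E <= MI_Y_TIB p q)%E &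
      forall q' : X -> nat -> R, is_channel_XN q' ->
        (lam%:E <= MI_Y_TIB p q')%E ->
        (MI_X_TIB p q <= MI_X_TIB p q')%E].

From HB Require Import structures.
From mathcomp Require Import all_boot all_order all_algebra.
From mathcomp Require Import all_classical all_reals all_analysis.
From mathcomp Require Import ring lra.
Import Order.TTheory GRing.Theory Num.Theory.
Local Open Scope ring_scope.

(* For [kappa = kX (x) e_Y] the output is [(T, Y)] with [T] depending on [X] only.
   Then [D(kappa(p_XY) || kappa(p_X p_Y)) = I(Y;T)], and the chain rule gives
   [I_kappa(X,Y;(T,Y)) = H(Y) + I(X;T|Y) = I(X;T) - I(Y;T) + H(Y)], all finite since
   [I(Y;T) <= I(X;T) <= H(X)].  So (A) minimises [I(X;T)] on [I(Y;T) = lam] while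
   (B) minimises it on [I(Y;T) >= lam].  The two agree because erasing the output
   with probability [1 - th] multiplies both [I(X;T)] and [I(Y;T)] by [th]: a channel
   strictly above the level [lam] can be scaled down onto it, strictly decreasing
   [I(X;T)]. *)

Section Xlogy.
Context {R : realType}.
Implicit Types a b c : R.

Lemma xlogy0 b : xlogy 0 b = 0.
Proof. by rewrite /xlogy eqxx. Qed.

Lemma xlogyE a b : 0 <= a -> (0 < a -> 0 < b) -> xlogy a b = a * (ln a - ln b).
Proof.
rewrite le_eqVlt => /predU1P[<- _|a_gt0 /(_ a_gt0) b_gt0]; first by rewrite xlogy0 mul0r.
by rewrite /xlogy gt_eqF // ln_div.
Qed.

Lemma xlogyM a b c : 0 <= a -> 0 < b -> (0 < a -> 0 < c) ->
  xlogy a (b * c) = a * (ln a - ln b - ln c).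
Proof.
rewrite le_eqVlt => /predU1P[<- _ _|a_gt0 b_gt0 /(_ a_gt0) c_gt0].
  by rewrite xlogy0 mul0r.
by rewrite xlogyE ?(ltW a_gt0) ?mulr_gt0 // lnM ?posrE // opprD addrA.
Qed.

Lemma xlogyy a : 0 <= a -> xlogy a a = 0.
Proof. by move=> a_ge0; rewrite xlogyE // subrr mulr0. Qed.

Lemma xlogyZ c a b : 0 <= c -> xlogy (c * a) (c * b) = c * xlogy a b.
Proof.
rewrite le_eqVlt => /predU1P[<-|c_gt0]; first by rewrite !mul0r xlogy0.
rewrite /xlogy mulf_eq0 gt_eqF //=; case: ifP => _; first by rewrite mulr0.
by rewrite invfM mulrACA divff ?gt_eqF // mul1r mulrA.
Qed.

(* Gibbs' bound, from [ln x <= x - 1] at [x = b c / a]. *)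
Lemma xlogy_ge a b c : 0 <= a -> 0 <= b -> (0 < a -> 0 < b) -> 0 < c ->
  a * ln c + a - b * c <= xlogy a b.
Proof.
rewrite le_eqVlt => /predU1P[<- b_ge0 _ c_gt0|a_gt0 _ /(_ a_gt0) b_gt0 c_gt0].
  by rewrite xlogy0 mul0r add0r sub0r oppr_le0 mulr_ge0 // ltW.
have x_gt0 : 0 < b * c / a by rewrite divr_gt0 // mulr_gt0.
have := le_ln1Dx (x := b * c / a - 1); rewrite addrCA subrr addr0 ltrBrDl subrr.
move=> /(_ x_gt0) /(ler_wpM2l (ltW a_gt0)).
rewrite ln_div ?posrE ?mulr_gt0 // lnM ?posrE // !mulrBr mulr1 mulrCA divff ?gt_eqF //.
by rewrite mulr1 xlogyE ?(ltW a_gt0) // => le; lra.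
Qed.

Lemma xlogy_sum_le (I : finType) (a b : I -> R) :
  (forall i, 0 <= a i) -> (forall i, 0 <= b i) -> (forall i, 0 < a i -> 0 < b i) ->
  xlogy (\sum_i a i) (\sum_i b i) <= \sum_i xlogy (a i) (b i).
Proof.
move=> a_ge0 b_ge0 ab.
set A := \sum_i a i; set B := \sum_i b i.
have [A0|A_neq0] := eqVneq A 0.
  move/eqP: (A0); rewrite psumr_eq0 // => /allP a0.
  by rewrite A0 xlogy0 big1 // => i _; rewrite (eqP (a0 i _)) ?xlogy0 ?mem_index_enum.
have A_gt0 : 0 < A by rewrite lt_def A_neq0 sumr_ge0.
have B_gt0 : 0 < B.
  rewrite lt_def sumr_ge0 // andbT; apply: contra_neq A_neq0 => /eqP.
  rewrite psumr_eq0 // => /allP b0; apply: big1 => i _.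
  apply/eqP; rewrite eq_le a_ge0 andbT leNgt; apply/negP => /ab.
  by rewrite (eqP (b0 i (mem_index_enum i))) ltxx.
have c_gt0 : 0 < A / B by rewrite divr_gt0.
have lower : \sum_i (a i * ln (A / B) + a i - b i * (A / B)) <= \sum_i xlogy (a i) (b i).
  by apply: ler_sum => i _; apply: xlogy_ge => //; apply: ab.
apply: le_trans lower.
rewrite !sumrB big_split -!mulr_suml -/A -/B xlogyE ?(ltW A_gt0) //= ln_div //.
rewrite mulrCA divff ?gt_eqF // mulr1; lra.
Qed.

Lemma xlogy_le_mul_ln a b c : 0 <= a -> a <= c -> 0 < b -> xlogy a (b * c) <= a * - ln b.
Proof.
move=> a_ge0 ac b_gt0.
rewrite xlogyM // => [|a_gt0]; last exact: lt_le_trans ac.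
have [->|a_neq0] := eqVneq a 0; first by rewrite !mul0r.
have a_gt0 : 0 < a by rewrite lt_def a_neq0.
rewrite -subr_ge0 -mulrBr mulr_ge0 // (_ : _ - _ = ln c - ln a); last by ring.
by rewrite subr_ge0 ler_ln ?posrE // (lt_le_trans a_gt0).
Qed.

End Xlogy.

Section LevelConstraint.
Variables (R : realFieldType) (T : Type) (feasible : T -> Prop) (f g : T -> R).
Hypothesis g_le_f : forall c, feasible c -> g c <= f c.
Hypothesis scale : forall th c, 0 <= th <= 1 -> feasible c ->
  exists2 c', feasible c' & f c' = th * f c /\ g c' = th * g c.
Variable lam : R.
Hypothesis lam_ge0 : 0 <= lam.

Lemma scale_below_level c : feasible c -> lam < g c ->
  exists2 c', feasible c' & g c' = lam /\ f c' < f c.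
Proof.
move=> hc lt_lam_gc; have gc_gt0 : 0 < g c := le_lt_trans lam_ge0 lt_lam_gc.
have fc_gt0 : 0 < f c := lt_le_trans gc_gt0 (g_le_f c hc).
have th_ge0 : 0 <= lam / g c by rewrite divr_ge0 // ltW.
have th_lt1 : lam / g c < 1 by rewrite ltr_pdivrMr // mul1r.
have [|c' hc' [fc' gc']] := scale (lam / g c) c _ hc; first by rewrite th_ge0 ltW.
exists c' => //; split; first by rewrite gc' divfK // gt_eqF.
by rewrite fc' gtr_pMl.
Qed.

Lemma scale_to_level c : feasible c -> lam <= g c ->
  exists2 c', feasible c' & g c' = lam /\ f c' <= f c.
Proof.
move=> hc; rewrite le_eqVlt => /predU1P[->|lt_lam_gc]; first by exists c.
by have [c' hc' [gc' /ltW]] := scale_below_level c hc lt_lam_gc; exists c'.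
Qed.

Lemma argmin_level_iff c : feasible c ->
  (g c = lam /\ forall c', feasible c' -> g c' = lam -> f c <= f c') <->
  (lam <= g c /\ forall c', feasible c' -> lam <= g c' -> f c <= f c').
Proof.
move=> hc; split=> [[gc_lam min_c]|[le_lam_gc min_c]].
  split=> [|c' hc' /(scale_to_level c' hc') [c'' hc'' [gc'' le_fc'']]].
    by rewrite gc_lam.
  exact: le_trans (min_c c'' hc'' gc'') le_fc''.
have gc_lam : g c = lam.
  apply/eqP; rewrite eq_le le_lam_gc andbT leNgt; apply/negP => lt_lam_gc.
  have [c' hc' [gc' lt_fc']] := scale_below_level c hc lt_lam_gc.
  by have := min_c c' hc'; rewrite gc' lexx leNgt lt_fc' => /(_ isT).
by split=> // c' hc' gc'; apply: min_c => //; rewrite gc'.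
Qed.

End LevelConstraint.

Definition pYT {R : realType} {X Y : finType} (p : X -> Y -> R) (k : X -> nat -> R)
    (y : Y) (t : nat) : R :=
  \sum_x p x y * k x t.

Definition ixt_term {R : realType} {X Y : finType} (p : X -> Y -> R) (k : X -> nat -> R)
    (t : nat) : R :=
  \sum_x xlogy (margX p x * k x t) (margX p x * qT p k t).

Definition iyt_term {R : realType} {X Y : finType} (p : X -> Y -> R) (k : X -> nat -> R)
    (t : nat) : R :=
  \sum_y xlogy (pYT p k y t) (margY p y * qT p k t).

Definition ixyt_term {R : realType} {X Y : finType} (p : X -> Y -> R)
    (k : X * Y -> nat * Y -> R) (t : nat) : R :=
  \sum_(y' : Y) \sum_(a : X * Y)
    xlogy (p a.1 a.2 * k a (t, y')) (p a.1 a.2 * push p k (t, y')).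

Definition hy_term {R : realType} {X Y : finType} (p : X -> Y -> R) (k : X -> nat -> R)
    (t : nat) : R :=
  \sum_y pYT p k y t * - ln (margY p y).

Lemma sum_pairE (V : nmodType) (I J : finType) (F : I * J -> V) :
  \sum_a F a = \sum_i \sum_j F (i, j).
Proof. by rewrite pair_bigA; apply: eq_bigr => -[]. Qed.

Lemma push_tensor_eY {R : realType} {X Y : finType} (r : X -> Y -> R) (k : X -> nat -> R)
    t y :
  push r (tensor_eY k) (t, y) = \sum_x r x y * k x t.
Proof.
rewrite /push sum_pairE; apply: eq_bigr => x _.
rewrite (bigD1 y) //= big1 => [|y' y'y]; last first.
  by rewrite /tensor_eY /= eq_sym (negPf y'y) mulr0 mul0r.
by rewrite /tensor_eY /= eqxx mulr1 addr0 mulrC.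
Qed.

Definition entropy {R : realType} {I : finType} (r : I -> R) : R :=
  \sum_i r i * - ln (r i).

Lemma nneseries_channel {R : realType} {X : finType} (k : X -> nat -> R) (w : X -> R) :
  is_channel_XN k -> (forall x, 0 <= w x) ->
  (\sum_(0 <= t <oo) (\sum_x w x * k x t)%:E)%E = (\sum_x w x)%:E.
Proof.
move=> [k_ge0 k_sum1] w_ge0.
rewrite (eq_eseriesr (g := fun t => \sum_x ((w x)%:E * (k x t)%:E)%E)) => [|t _]; last first.
  by rewrite -sumEFin; apply: eq_bigr => x _; rewrite EFinM.
rewrite nneseries_sum => [|x t _]; last by rewrite mule_ge0 // lee_fin.
rewrite -sumEFin; apply: eq_bigr => x _.
by rewrite nneseriesZl ?k_sum1 ?mule1 // => t _; rewrite lee_fin.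
Qed.

(* [fine] sends infinite values to [0]; both series are finite on channels, see [MI_X_TIBE]. *)
Definition IXT {R : realType} {X Y : finType} (p : X -> Y -> R) (k : X -> nat -> R) : R :=
  fine (MI_X_TIB p k).

Definition IYT {R : realType} {X Y : finType} (p : X -> Y -> R) (k : X -> nat -> R) : R :=
  fine (MI_Y_TIB p k).

Lemma KL_tensor_eY {R : realType} {X Y : finType} (p : X -> Y -> R) (k : X -> nat -> R) :
  KL_NY (push p (tensor_eY k)) (push (prod_marg p) (tensor_eY k)) = MI_Y_TIB p k.
Proof.
apply: eq_eseriesr => t _; congr (_%:E); apply: eq_bigr => y _.
rewrite !push_tensor_eY /prod_marg /qT mulr_sumr; congr (xlogy _ _).
by apply: eq_bigr => x _; ring.
Qed.

Lemma nneseries_recl_shift {R : realType} (f : nat -> R) : (forall t, 0 <= f t) ->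
  (\sum_(0 <= t <oo) (f t)%:E = (f 0%N)%:E + \sum_(0 <= t <oo) (f t.+1)%:E)%E.
Proof.
move=> f_ge0; rewrite nneseries_recl // => [|t _]; last by rewrite lee_fin.
rewrite -(nneseries_addn (f := fun t => (f t)%:E)) => [|t]; last by rewrite lee_fin.
by congr (_ + _)%E; apply: eq_eseriesr => t _; rewrite addn1.
Qed.

(* Output [0] is an erasure, emitted with probability [1 - th] whatever the input;
   otherwise [q] is used, with its outputs shifted by one. *)
Definition erasure_mix {R : realType} {X : finType} (th : R) (q : X -> nat -> R) :
    X -> nat -> R :=
  fun x t => if t is n.+1 then th * q x n else 1 - th.

Section Distribution.
Variables (R : realType) (X Y : finType) (p : X -> Y -> R).
Hypothesis p_gt0 : forall x y, 0 < p x y.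
Hypothesis p_sum1 : \sum_x \sum_y p x y = 1.

Lemma margX_gt0 x : 0 < margX p x.
Proof.
have [y _|Y0] := pickP (@predT Y).
  by rewrite /margX (bigD1 y) //= ltr_pwDl // sumr_ge0 // => y' _; apply: ltW.
by move: p_sum1; rewrite big1 => [/eqP|x' _]; rewrite ?big_pred0 // eq_sym oner_eq0.
Qed.

Lemma margY_gt0 y : 0 < margY p y.
Proof.
have [x _|X0] := pickP (@predT X).
  by rewrite /margY (bigD1 x) //= ltr_pwDl // sumr_ge0 // => x' _; apply: ltW.
by move: p_sum1; rewrite big_pred0 // => /eqP; rewrite eq_sym oner_eq0.
Qed.

Lemma margX_le1 x : margX p x <= 1.
Proof.
rewrite -p_sum1 (bigD1 x) //= lerDl sumr_ge0 // => x' _; exact: ltW (margX_gt0 x').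
Qed.

Lemma margY_le1 y : margY p y <= 1.
Proof.
rewrite -p_sum1 exchange_big (bigD1 y) //= lerDl sumr_ge0 // => y' _.
exact: ltW (margY_gt0 y').
Qed.

Lemma sum_margY : \sum_y margY p y = 1.
Proof. by rewrite exchange_big. Qed.

Section Terms.
Context {k : X -> nat -> R}.
Hypothesis k_ge0 : forall x t, 0 <= k x t.
Variable t : nat.

Lemma pYT_ge0 y : 0 <= pYT p k y t.
Proof. by apply: sumr_ge0 => x _; rewrite mulr_ge0 // ltW. Qed.

Lemma sum_pYT : \sum_y pYT p k y t = qT p k t.
Proof. by rewrite exchange_big; apply: eq_bigr => x _; rewrite mulr_suml. Qed.

Lemma pYT_le_qT y : pYT p k y t <= qT p k t.
Proof. by rewrite -sum_pYT (bigD1 y) //= lerDl sumr_ge0 // => y' _; apply: pYT_ge0. Qed.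

Lemma pYT_gt0 x y : 0 < k x t -> 0 < pYT p k y t.
Proof.
move=> kxt_gt0; rewrite /pYT (bigD1 x) //= ltr_pwDl ?mulr_gt0 // sumr_ge0 // => x' _.
by rewrite mulr_ge0 // ltW.
Qed.

Lemma margX_mul_le_qT x : margX p x * k x t <= qT p k t.
Proof.
rewrite /qT (bigD1 x) //= lerDl sumr_ge0 // => x' _.
by rewrite mulr_ge0 // ltW // margX_gt0.
Qed.

Lemma qT_gt0 x : 0 < k x t -> 0 < qT p k t.
Proof. by move=> kxt_gt0; rewrite (lt_le_trans _ (margX_mul_le_qT x)) ?mulr_gt0 ?margX_gt0. Qed.

Lemma ixt_termE : ixt_term p k t = \sum_y \sum_x p x y * xlogy (k x t) (qT p k t).
Proof.
rewrite exchange_big; apply: eq_bigr => x _ /=.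
by rewrite xlogyZ ?(ltW (margX_gt0 x)) // mulr_suml.
Qed.

Lemma ixyt_term_tensor_eY :
  ixyt_term p (tensor_eY k) t = \sum_y \sum_x p x y * xlogy (k x t) (pYT p k y t).
Proof.
apply: eq_bigr => y _; rewrite sum_pairE; apply: eq_bigr => x _.
rewrite (bigD1 y) //= big1 => [|y' y'y]; last first.
  by rewrite /tensor_eY /= eq_sym (negPf y'y) !mulr0 xlogy0.
by rewrite addr0 /tensor_eY /= eqxx mulr1 push_tensor_eY xlogyZ // ltW.
Qed.

Lemma ixyt_term_tensor_eY_add :
  ixyt_term p (tensor_eY k) t + iyt_term p k t = ixt_term p k t + hy_term p k t.
Proof.
rewrite ixyt_term_tensor_eY ixt_termE -!big_split; apply: eq_bigr => y _ /=.
have xlogy_kE c : (forall x, 0 < k x t -> 0 < c) ->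
    \sum_x p x y * xlogy (k x t) c = \sum_x p x y * k x t * (ln (k x t) - ln c).
  by move=> c_gt0; apply: eq_bigr => x _; rewrite xlogyE ?mulrA //; apply: c_gt0.
have pYT_mulE c : pYT p k y t * c = \sum_x p x y * k x t * c by rewrite /pYT mulr_suml.
rewrite (xlogy_kE (pYT p k y t)) => [|x]; last exact: pYT_gt0.
rewrite (xlogy_kE (qT p k t)) => [|x]; last exact: qT_gt0.
rewrite xlogyM ?pYT_ge0 ?margY_gt0 // => [|J_gt0]; last exact: lt_le_trans (pYT_le_qT y).
by rewrite !pYT_mulE -!big_split; apply: eq_bigr => x _ /=; ring.
Qed.

Lemma qT_ge0 : 0 <= qT p k t.
Proof. by rewrite -sum_pYT sumr_ge0 // => y _; apply: pYT_ge0. Qed.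

Lemma iyt_term_ge0 : 0 <= iyt_term p k t.
Proof.
have := @xlogy_sum_le R Y (fun y => pYT p k y t) (fun y => margY p y * qT p k t).
rewrite sum_pYT -mulr_suml sum_margY mul1r xlogyy ?qT_ge0 //; apply=> [y|y|y].
- exact: pYT_ge0.
- by rewrite mulr_ge0 ?qT_ge0 // ltW ?margY_gt0.
- by move=> J_gt0; rewrite mulr_gt0 ?margY_gt0 // (lt_le_trans J_gt0 (pYT_le_qT y)).
Qed.

Lemma iyt_term_le_ixt : iyt_term p k t <= ixt_term p k t.
Proof.
rewrite ixt_termE; apply: ler_sum => y _.
rewrite (eq_bigr (fun x => xlogy (p x y * k x t) (p x y * qT p k t))) => [|x _]; last first.
  by rewrite xlogyZ // ltW.
rewrite /margY mulr_suml; apply: xlogy_sum_le => [x|x|x].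
- by rewrite mulr_ge0 // ltW.
- by rewrite mulr_ge0 ?qT_ge0 // ltW.
- by rewrite !pmulr_rgt0 //; apply: qT_gt0.
Qed.

Lemma iyt_term_le_hy : iyt_term p k t <= hy_term p k t.
Proof.
apply: ler_sum => y _; apply: xlogy_le_mul_ln.
- exact: pYT_ge0.
- exact: pYT_le_qT.
- exact: margY_gt0.
Qed.

Lemma ixt_term_le : ixt_term p k t <= \sum_x margX p x * - ln (margX p x) * k x t.
Proof.
apply: ler_sum => x _; rewrite mulrAC; apply: xlogy_le_mul_ln.
- by rewrite mulr_ge0 // ltW // margX_gt0.
- exact: margX_mul_le_qT.
- exact: margX_gt0.
Qed.

Lemma ixt_term_ge0 : 0 <= ixt_term p k t.
Proof. exact: le_trans iyt_term_ge0 iyt_term_le_ixt. Qed.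

Lemma hy_term_ge0 : 0 <= hy_term p k t.
Proof. exact: le_trans iyt_term_ge0 iyt_term_le_hy. Qed.

Lemma ixyt_term_tensor_eY_ge0 : 0 <= ixyt_term p (tensor_eY k) t.
Proof.
rewrite -(addrK (iyt_term p k t) (ixyt_term _ _ _)) ixyt_term_tensor_eY_add -addrA.
by rewrite addr_ge0 ?subr_ge0 ?iyt_term_le_hy ?ixt_term_ge0.
Qed.

End Terms.

Section Channel.
Variable k : X -> nat -> R.
Hypothesis hk : is_channel_XN k.
Let k_ge0 : forall x t, 0 <= k x t := proj1 hk.

Lemma MI_Y_TIB_ge0 : (0 <= MI_Y_TIB p k)%E.
Proof. by apply: nneseries_ge0 => t _ _; rewrite lee_fin iyt_term_ge0. Qed.

Lemma MI_Y_TIB_le_MI_X_TIB : (MI_Y_TIB p k <= MI_X_TIB p k)%E.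
Proof.
apply: lee_nneseries => t _; last by rewrite lee_fin iyt_term_le_ixt.
by rewrite lee_fin iyt_term_ge0.
Qed.

Lemma MI_X_TIB_le_entropy : (MI_X_TIB p k <= (entropy (margX p))%:E)%E.
Proof.
rewrite -(nneseries_channel k (fun x => margX p x * - ln (margX p x)) hk) => [|x]; last first.
  by rewrite mulr_ge0 ?oppr_ge0 ?ln_le0 ?margX_le1 // ltW ?margX_gt0.
apply: lee_nneseries => t _; last by rewrite lee_fin ixt_term_le.
by rewrite lee_fin ixt_term_ge0.
Qed.

Lemma hy_term_series : (\sum_(0 <= t <oo) (hy_term p k t)%:E)%E = (entropy (margY p))%:E.
Proof.
have -> : entropy (margY p) = \sum_x \sum_y p x y * - ln (margY p y).
  by rewrite /entropy exchange_big; apply: eq_bigr => y _; rewrite /margY mulr_suml.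
rewrite -(nneseries_channel k (fun x => \sum_y p x y * - ln (margY p y)) hk); last first.
  move=> x; apply: sumr_ge0 => y _.
  by rewrite mulr_ge0 ?oppr_ge0 ?ln_le0 ?margY_le1 // ltW.
apply: eq_eseriesr => t _; congr (_%:E).
rewrite /hy_term /pYT; under eq_bigr do rewrite mulr_suml.
rewrite exchange_big; apply: eq_bigr => x _ /=; rewrite mulr_suml.
by apply: eq_bigr => y _; ring.
Qed.

Lemma MI_XY_T_tensor_eY_add :
  (MI_XY_T p (tensor_eY k) + MI_Y_TIB p k = MI_X_TIB p k + (entropy (margY p))%:E)%E.
Proof.
rewrite -hy_term_series -!nneseriesD => [|t _ _|t _ _|t _ _|t _ _]; rewrite ?lee_fin.
- apply: eq_eseriesr => t _; rewrite -!EFinD; congr (_%:E).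
  exact: ixyt_term_tensor_eY_add.
- exact: ixt_term_ge0.
- exact: hy_term_ge0.
- exact: ixyt_term_tensor_eY_ge0.
- exact: iyt_term_ge0.
Qed.

Lemma MI_X_TIBE : MI_X_TIB p k = (IXT p k)%:E.
Proof.
rewrite /IXT fineK // ge0_fin_numE ?(le_lt_trans MI_X_TIB_le_entropy) ?ltry //.
exact: le_trans MI_Y_TIB_ge0 MI_Y_TIB_le_MI_X_TIB.
Qed.

Lemma MI_Y_TIBE : MI_Y_TIB p k = (IYT p k)%:E.
Proof.
rewrite /IYT fineK // ge0_fin_numE ?MI_Y_TIB_ge0 //.
by rewrite (le_lt_trans MI_Y_TIB_le_MI_X_TIB) // MI_X_TIBE ltry.
Qed.

Lemma IYT_le_IXT : IYT p k <= IXT p k.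
Proof. by rewrite -lee_fin -MI_Y_TIBE -MI_X_TIBE MI_Y_TIB_le_MI_X_TIB. Qed.

Lemma MI_XY_T_tensor_eYE :
  MI_XY_T p (tensor_eY k) = (IXT p k - IYT p k + entropy (margY p))%:E.
Proof.
have := MI_XY_T_tensor_eY_add; rewrite MI_X_TIBE MI_Y_TIBE.
by case: (MI_XY_T _ _) => [r [rE]||] //=; congr (_%:E); lra.
Qed.

End Channel.

Section Erasure.
Variables (th : R) (q : X -> nat -> R).
Hypotheses (th_ge0 : 0 <= th) (th_le1 : th <= 1) (hq : is_channel_XN q).

Lemma erasure_mix_ge0 x t : 0 <= erasure_mix th q x t.
Proof. by case: t => [|n] /=; rewrite ?subr_ge0 ?mulr_ge0 ?(proj1 hq). Qed.

Lemma erasure_mix_channel : is_channel_XN (erasure_mix th q).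
Proof.
split=> [|x]; first exact: erasure_mix_ge0.
rewrite nneseries_recl_shift; last exact: erasure_mix_ge0.
under eq_eseriesr do rewrite /= EFinM.
rewrite nneseriesZl => [|t _]; last by rewrite lee_fin (proj1 hq).
by rewrite (proj2 hq x) mule1 -EFinD subrK.
Qed.

Lemma qT_erasure_mix0 : qT p (erasure_mix th q) 0 = 1 - th.
Proof. by rewrite /qT -mulr_suml p_sum1 mul1r. Qed.

Lemma qT_erasure_mixS n : qT p (erasure_mix th q) n.+1 = th * qT p q n.
Proof. by rewrite /qT mulr_sumr; apply: eq_bigr => x _; rewrite mulrCA. Qed.

Lemma MI_X_TIB_erasure_mix : MI_X_TIB p (erasure_mix th q) = (th%:E * MI_X_TIB p q)%E.
Proof.
rewrite [LHS]nneseries_recl_shift => [|t]; last exact: ixt_term_ge0 erasure_mix_ge0 t.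
rewrite [X in (X%:E + _)%E]big1 ?add0e => [|x _]; last first.
  by rewrite qT_erasure_mix0 xlogyy // mulr_ge0 ?subr_ge0 // ltW ?margX_gt0.
rewrite -nneseriesZl => [|t _]; last by rewrite lee_fin (ixt_term_ge0 (proj1 hq)).
apply: eq_eseriesr => t _; rewrite -EFinM; congr (_%:E).
rewrite qT_erasure_mixS [RHS]mulr_sumr; apply: eq_bigr => x _ /=.
by rewrite !(mulrCA (margX p x) th) [LHS]xlogyZ.
Qed.

Lemma MI_Y_TIB_erasure_mix : MI_Y_TIB p (erasure_mix th q) = (th%:E * MI_Y_TIB p q)%E.
Proof.
rewrite [LHS]nneseries_recl_shift => [|t]; last exact: iyt_term_ge0 erasure_mix_ge0 t.
rewrite [X in (X%:E + _)%E]big1 ?add0e => [|y _]; last first.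
  rewrite qT_erasure_mix0 /= -mulr_suml xlogyy // mulr_ge0 ?subr_ge0 //.
  exact: ltW (margY_gt0 y).
rewrite -nneseriesZl => [|t _]; last by rewrite lee_fin (iyt_term_ge0 (proj1 hq)).
apply: eq_eseriesr => t _; rewrite -EFinM; congr (_%:E).
rewrite qT_erasure_mixS [RHS]mulr_sumr; apply: eq_bigr => y _ /=.
rewrite (mulrCA (margY p y) th) -xlogyZ // [in RHS]mulr_sumr; congr (xlogy _ _).
by apply: eq_bigr => x _; rewrite mulrCA.
Qed.

End Erasure.

Lemma erasure_scales th q : 0 <= th <= 1 -> is_channel_XN q ->
  exists2 q', is_channel_XN q' & IXT p q' = th * IXT p q /\ IYT p q' = th * IYT p q.
Proof.
move=> /andP[th_ge0 th_le1] hq; exists (erasure_mix th q); first exact: erasure_mix_channel.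
by rewrite /IXT /IYT MI_X_TIB_erasure_mix ?MI_Y_TIB_erasure_mix // MI_X_TIBE ?MI_Y_TIBE.
Qed.

Lemma solves_A_tensor_eYE lam k : is_channel_XN k ->
  solves_A p lam (tensor_eY k) <->
  IYT p k = lam /\ forall q, is_channel_XN q -> IYT p q = lam -> IXT p k <= IXT p q.
Proof.
move=> hk; rewrite /solves_A KL_tensor_eY MI_Y_TIBE //; split.
  case=> _ [Ik] min_k; split=> // q hq Iq.
  have := min_k (tensor_eY q); rewrite KL_tensor_eY MI_Y_TIBE // Iq.
  by rewrite !MI_XY_T_tensor_eYE // Ik Iq lee_fin lerD2r lerD2r; apply=> //; exists q.
case=> Ik min_k; split; [by exists k | by rewrite Ik |].
move=> _ [q [hq ->]]; rewrite KL_tensor_eY MI_Y_TIBE // => -[Iq].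
by rewrite !MI_XY_T_tensor_eYE // Ik Iq lee_fin lerD2r lerD2r min_k.
Qed.

Lemma solves_BE lam k : is_channel_XN k ->
  solves_B p lam k <->
  lam <= IYT p k /\ forall q, is_channel_XN q -> lam <= IYT p q -> IXT p k <= IXT p q.
Proof.
move=> hk; rewrite /solves_B MI_Y_TIBE // lee_fin; split.
  by case=> _ Ik min_k; split=> // q hq Iq; rewrite -lee_fin -!MI_X_TIBE ?min_k ?MI_Y_TIBE.
case=> Ik min_k; split=> // q hq; rewrite MI_Y_TIBE // !MI_X_TIBE // !lee_fin.
exact: min_k.
Qed.

End Distribution.

Theorem proposition5 (R : realType) (X Y : finType) (p : X -> Y -> R) (lam : R)
    (kX : X -> nat -> R) :
  full_support_dist p -> 0 <= lam -> lam <= MI_XY p ->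
  is_channel_XN kX ->
  (solves_A p lam (tensor_eY kX) <-> solves_B p lam kX).
Proof.
(* The bound [lam <= MI_XY p] only makes both problems feasible. *)
move=> [p_gt0 p_sum1] lam_ge0 _ hk.
rewrite solves_A_tensor_eYE // solves_BE //.
apply: argmin_level_iff => //.
- exact: IYT_le_IXT.
- exact: erasure_scales.
Qed.
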